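(* Let $m\ge 2$ and let $\mathcal{H}$ be the incidence structure produced by the Construction described in the context (from a projective plane $\mathcal{P}$ of order $m$, affine planes $\mathcal{A}_P$ of order $m$ for each point $P$ of $\mathcal{P}$, orthogonal arrays $\mathcal{O}_l=OA(2,m+1,m)$ for each line $l$ of $\mathcal{P}$, and admissible choices $\pi$ and $\beta$). Then $\mathcal{H}$ is a $2$-uniform $(m,m)$PH-plane.
   Context: An orthogonal array $OA(2,k,v)$ is a $v^2\times k$ array with entries from a $v$-element symbol set such that in any two columns every ordered pair of symbols occurs in exactly one row. A projective plane of order $m$ has $m+1$ points on each line and $m+1$ lines through each point; an affine plane of order $m$ has $m^2$ points, $m$ points per line, and its lines split into $m+1$ parallel classes, each consisting of $m$ pairwise disjoint lines covering all points. Construction (Algorithm 1). Let $\mathcal{P}$ be a projective plane of order $m$. For each point $P$ of $\mathcal{P}$ let $\mathcal{A}_P$ be an affine plane of order $m$ (not necessarily all the same). For each line $l$ of $\mathcal{P}$ let $\mathcal{O}_l$ be an $OA(2,m+1,m)$ on a symbol set $\Sigma_l$ whose $m+1$ columns are labelled bijectively by the $m+1$ points of $l$. For each incident pair $P\in l$ choose a parallel class $\pi(P,l)$ of $\mathcal{A}_P$ such that, for each fixed $P$, the map $l\mapsto\pi(P,l)$ is a bijection from the $m+1$ lines of $\mathcal{P}$ through $P$ to the $m+1$ parallel classes of $\mathcal{A}_P$; and choose a bijection $\beta_{P,l}$ from $\Sigma_l$ to the $m$ lines of $\pi(P,l)$. The points of $\mathcal{H}$ are the pairs $(P,x)$ with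 $P$ a point of $\mathcal{P}$ and $x$ a point of $\mathcal{A}_P$. For each line $l$ of $\mathcal{P}$ and each row $r$ of $\mathcal{O}_l$, $\mathcal{H}$ has the line $\bigcup_{P\in l}\{(P,x): x\in \beta_{P,l}(\mathcal{O}_l(r,P))\}$, where $\mathcal{O}_l(r,P)$ is the entry of $\mathcal{O}_l$ in row $r$ and the column labelled $P$. Incidence is membership. Projective Hjelmslev plane: an incidence structure $\mathcal{H}$ such that (1) any two points are incident with at least one line; (2) any two lines meet in at least one point; (3) two lines meeting in more than one point are called neighbours; (4) two points incident with more than one common line are called neighbours; (5) there is an incidence-preserving surjection $\phi$ from $\mathcal{H}$ onto an ordinary projective plane with $\phi(P)=\phi(Q)\iff P\sim Q$ for points and $\phi(g)=\phi(h)\iff g\sim h$ for lines (where $\sim$ is the neighbour relation, reflexively extended; it is an equivalence relation). A $(t,r)$PH-plane is a projective Hjelmslev plane in which each line has $t(r+1)$ points and, for each point $P$ on a line $g$, exactly $t$ points of $g$ are neighbours of $P$ (including $P$); then the image projective plane has order $r$. Affine Hjelmslev plane: an incidence structure such that any two points are incident with at least one line, lines meeting in more than one point are neighbours, and there is an incidence-preserving surjection $\phi$ onto an ordinary affine plane with $\phi(P)=\phi(Q)\iff P\sim Q$, $\phi(g)=\phi(h)\iff g\sim h$, and lines with no common point mapped to parallel lines. Uniformity: a $1$-uniform projective (resp. affine) Hjelmslev plane is an ordinary projective (resp. affine) plane. For a point $P$, the point-neighbourhood restriction $\bar P$ is the incidence structure whose points are the points $Q\sim P$ and whose lines are the nonempty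 sets $g\cap\bar P$ for lines $g$ of $\mathcal{H}$. A projective (resp. affine) Hjelmslev plane is $n$-uniform if for every point $P$, $\bar P$ is an $(n-1)$-uniform affine Hjelmslev plane, and every line of $\bar P$ is the restriction of the same number of lines of $\mathcal{H}$. *)

From HB Require Import structures.
From mathcomp Require Import all_boot.
Set Implicit Arguments. Unset Strict Implicit. Unset Printing Implicit Defensive.

Definition proj_plane (T U : finType) (inc : T -> U -> bool) : Prop :=
  [/\ forall P Q : T, P != Q -> #|[set l | inc P l && inc Q l]| = 1,
      forall l g : U, l != g -> #|[set P | inc P l && inc P g]| = 1 &
      exists P1 P2 P3 P4 : T,
        uniq [:: P1; P2; P3; P4] /\
        forall l : U, count (fun P => inc P l) [:: P1; P2; P3; P4] <= 2].

Definition proj_plane_order (m : nat) (T U : finType) (inc : T -> U -> bool) : Prop :=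
  [/\ proj_plane inc,
      forall l : U, #|[set P | inc P l]| = m.+1 &
      forall P : T, #|[set l | inc P l]| = m.+1].

Definition aff_plane (X : finType) (D : {set X}) (Ls : {set {set X}}) : Prop :=
  [/\ forall L, L \in Ls -> L \subset D,
      forall x y, x \in D -> y \in D -> x != y ->
        #|[set L in Ls | (x \in L) && (y \in L)]| = 1,
      forall L x, L \in Ls -> x \in D -> x \notin L ->
        #|[set M in Ls | (x \in M) && [disjoint L & M]]| = 1 &
      exists x y z, [/\ x \in D, y \in D, z \in D &
        forall L, L \in Ls -> ~~ [&& x \in L, y \in L & z \in L]]].

Definition aff_plane_order (m : nat) (X : finType) (Ls : {set {set X}}) : Prop :=
  [/\ aff_plane [set: X] Ls, #|X| = m ^ 2 & forall L, L \in Ls -> #|L| = m].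

Definition par_classes (X : finType) (Ls : {set {set X}}) : {set {set {set X}}} :=
  [set [set M in Ls | (L == M) || [disjoint L & M]] | L in Ls].

Definition pt_nb (X : finType) (HL : {set {set X}}) (x y : X) : bool :=
  (x == y) || (1 < #|[set g in HL | (x \in g) && (y \in g)]|).

Definition ln_nb (X : finType) (g h : {set X}) : bool :=
  (g == h) || (1 < #|g :&: h|).

Definition proj_hjelmslev (X : finType) (HL : {set {set X}}) : Prop :=
  [/\ (forall x y : X, exists2 g : {set X}, g \in HL & (x \in g) && (y \in g)),
      (forall g h, g \in HL -> h \in HL -> exists x, x \in g :&: h) &
      exists (T U : finType) (inc : T -> U -> bool) (phip : X -> T) (phil : {set X} -> U),
        proj_plane inc /\
        [/\ (forall x g, g \in HL -> x \in g -> inc (phip x) (phil g)),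
            (forall t : T, exists x, phip x = t),
            (forall u : U, exists2 g : {set X}, g \in HL & phil g = u),
            (forall x y, phip x = phip y <-> pt_nb HL x y) &
            (forall g h, g \in HL -> h \in HL -> (phil g = phil h <-> ln_nb g h))]].

Definition tr_PH_plane (t r : nat) (X : finType) (HL : {set {set X}}) : Prop :=
  [/\ proj_hjelmslev HL,
      forall g, g \in HL -> #|g| = t * r.+1 &
      forall g x, g \in HL -> x \in g -> #|[set y in g | pt_nb HL x y]| = t].

Definition nbhd (X : finType) (HL : {set {set X}}) (x : X) : {set X} :=
  [set y | pt_nb HL x y].
Definition nbhd_lines (X : finType) (HL : {set {set X}}) (x : X) : {set {set X}} :=
  [set g :&: nbhd HL x | g in HL & g :&: nbhd HL x != set0].

(* 2-uniform projective Hjelmslev plane: each neighbourhood restriction is a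
   1-uniform affine Hjelmslev plane, i.e. an ordinary affine plane, and every
   line of it is the restriction of the same number of lines of H. *)
Definition two_uniform_PH (X : finType) (HL : {set {set X}}) : Prop :=
  proj_hjelmslev HL /\
  forall x : X,
    aff_plane (nbhd HL x) (nbhd_lines HL x) /\
    exists k, forall b, b \in nbhd_lines HL x ->
      #|[set g in HL | g :&: nbhd HL x == b]| = k.

Definition Hline (m : nat) (Pt Ln : finType) (pinc : Pt -> Ln -> bool)
  (AP : Pt -> finType) (Sym : Ln -> finType)
  (O : forall l : Ln, 'I_(m ^ 2) -> Pt -> Sym l)
  (beta : forall (P : Pt) (l : Ln), Sym l -> {set AP P})
  (l : Ln) (r : 'I_(m ^ 2)) : {set {P : Pt & AP P}} :=
  [set x | pinc (tag x) l && (tagged x \in beta (tag x) l (O l r (tag x)))].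

Definition Hlines (m : nat) (Pt Ln : finType) (pinc : Pt -> Ln -> bool)
  (AP : Pt -> finType) (Sym : Ln -> finType)
  (O : forall l : Ln, 'I_(m ^ 2) -> Pt -> Sym l)
  (beta : forall (P : Pt) (l : Ln), Sym l -> {set AP P}) : {set {set {P : Pt & AP P}}} :=
  [set Hline pinc O beta lr.1 lr.2 | lr : Ln * 'I_(m ^ 2)].

From HB Require Import structures.
From mathcomp Require Import all_boot zify.
Set Implicit Arguments. Unset Strict Implicit. Unset Printing Implicit Defensive.

(* A point of H is a pair (P, y) with y in A_P, and the line of H given by the line l of
   P and the row r of O_l is the union, over the points P of l, of the copies of the lines
   beta(P,l,O_l(r,P)) of A_P.  The whole proof rests on three kinds of facts:
   - affine planes: the lines beta(P,l,a), a in Sym l, form the parallel class pi(P,l),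
     so they partition A_P, and lines of distinct classes meet in exactly one point;
   - orthogonal arrays OA(2,m+1,m) with m^2 rows: two rows agree in at most one column,
     each symbol occurs m times per column, and (by double counting) any two rows agree
     in some column;
   - the projective plane P: two points span one line, two lines meet in one point.
   From these, two points of H are neighbours iff they lie over the same point of P
   (they then share m >= 2 lines, otherwise exactly one), and two lines of H are
   neighbours iff they lie over the same line of P (they then share m >= 2 points,
   otherwise exactly one).  Hence the projection onto P is the required epimorphism,
   each line has m(m+1) points in neighbourhoods of size m, and the neighbourhood of a
   point over P is a copy of the affine plane A_P each of whose lines is the
   restriction of exactly m lines of H. *)

Lemma disjoint_memP (T : finType) (A B : {set T}) :
  reflect (forall x, x \in A -> x \in B -> False) [disjoint A & B].
Proof.
rewrite disjoint_subset; apply: (iffP subsetP) => H x.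
  by move=> /H; rewrite inE => /negP.
by move=> xA; rewrite inE; apply/negP; exact: H.
Qed.

Lemma card_fibres (T U : finType) (A : {set T}) (f : T -> U) :
  #|A| = \sum_(u : U) #|[set x in A | f x == u]|.
Proof.
rewrite -sum1_card (partition_big f xpredT) //=; apply: eq_bigr => u _.
by rewrite -sum1_card; apply: eq_bigl => x; rewrite inE.
Qed.

Lemma card_setin_sum (T : finType) (A : {pred T}) (p : pred T) :
  #|[set x in A | p x]| = \sum_(x in A) (p x : nat).
Proof.
rewrite -sum1_card (eq_bigl (fun x => (x \in A) && p x)); last by move=> x; rewrite inE.
by rewrite big_mkcondr; apply: eq_bigr => x _; case: (p x).
Qed.

Section AffinePlane.
Variables (X : finType) (Ls : {set {set X}}).
Hypothesis affX : aff_plane [set: X] Ls.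

Lemma two_points_line x y : x != y -> exists2 L, L \in Ls & (x \in L) && (y \in L).
Proof.
case: affX => _ join _ _ xy.
have := join x y (in_setT _) (in_setT _) xy.
move=> /eqP; rewrite eqn_leq => /andP[_]; rewrite card_gt0 => /set0Pn[L].
by rewrite inE => /andP[LL xyL]; exists L.
Qed.

Lemma line_uniq L M x y : L \in Ls -> M \in Ls -> x != y ->
  x \in L -> y \in L -> x \in M -> y \in M -> L = M.
Proof.
case: affX => _ join _ _ LL ML xy xL yL xM yM.
have /eqP/cards1P[N hN] := join x y (in_setT _) (in_setT _) xy.
have : L \in [set N] by rewrite -hN inE LL xL yL.
have : M \in [set N] by rewrite -hN inE ML xM yM.
by rewrite !inE => /eqP-> /eqP->.
Qed.

Lemma parallel_uniq x L M1 M2 : L \in Ls -> M1 \in Ls -> M2 \in Ls -> x \notin L ->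
  x \in M1 -> x \in M2 -> [disjoint L & M1] -> [disjoint L & M2] -> M1 = M2.
Proof.
case: affX => _ _ playfair _ LL M1L M2L xL xM1 xM2 d1 d2.
have /eqP/cards1P[N hN] := playfair L x LL (in_setT _) xL.
have : M1 \in [set N] by rewrite -hN inE M1L xM1 d1.
have : M2 \in [set N] by rewrite -hN inE M2L xM2 d2.
by rewrite !inE => /eqP-> /eqP->.
Qed.

Definition parallel (L M : {set X}) := (L == M) || [disjoint L & M].

Lemma parallel_sym L M : parallel L M = parallel M L.
Proof. by rewrite /parallel eq_sym disjoint_sym. Qed.

Lemma parallel_trans L M N : L \in Ls -> M \in Ls -> N \in Ls ->
  parallel L M -> parallel M N -> parallel L N.
Proof.
move=> LL ML NL; rewrite /parallel.
case/orP=> [/eqP->//|dLM]; case/orP=> [/eqP<-|dMN]; first by rewrite dLM orbT.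
case: (eqVneq L N) => //= LN; apply/disjoint_memP => x xL xN.
have xM : x \notin M by rewrite (disjointFr dLM xL).
suff : L = N by move/eqP: LN.
by apply: (parallel_uniq ML LL NL xM xL xN); rewrite // disjoint_sym.
Qed.

Definition parallel_class (L : {set X}) := [set M in Ls | parallel L M].

Lemma parallel_class_in L : L \in Ls -> parallel_class L \in par_classes Ls.
Proof. by move=> LL; apply/imsetP; exists L. Qed.

Lemma parallel_class_self L : L \in Ls -> L \in parallel_class L.
Proof. by move=> LL; rewrite inE LL /parallel eqxx. Qed.

Lemma par_classE S M : S \in par_classes Ls -> M \in S ->
  M \in Ls /\ S = parallel_class M.
Proof.
case/imsetP => L0 L0L ->; rewrite inE => /andP[ML pL0M]; split => //.
apply/setP => N; rewrite !inE; case NL: (N \in Ls) => //=.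
apply/idP/idP => h; last exact: parallel_trans pL0M h.
by apply: parallel_trans (h) => //; rewrite parallel_sym.
Qed.

Lemma par_class_eq S1 S2 M : S1 \in par_classes Ls -> S2 \in par_classes Ls ->
  M \in S1 -> M \in S2 -> S1 = S2.
Proof.
by move=> h1 h2 m1 m2; case: (par_classE h1 m1) => _ ->; case: (par_classE h2 m2) => _ ->.
Qed.

Lemma par_class_cover S x : S \in par_classes Ls -> exists2 M, M \in S & x \in M.
Proof.
case/imsetP => L0 L0L ->.
case xL0 : (x \in L0); first by exists L0 => //; exact: parallel_class_self.
case: affX => _ _ playfair _.
have := playfair L0 x L0L (in_setT _) (negbT xL0).
move=> /eqP; rewrite eqn_leq => /andP[_]; rewrite card_gt0 => /set0Pn[M].
rewrite !inE => /andP[ML /andP[xM d]].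
by exists M => //; rewrite inE ML /parallel d orbT.
Qed.

Lemma par_class_disjoint S M1 M2 x : S \in par_classes Ls -> M1 \in S -> M2 \in S ->
  x \in M1 -> x \in M2 -> M1 = M2.
Proof.
move=> hS m1 m2 x1 x2; case: (par_classE hS m1) => _ e.
move: m2; rewrite e inE => /andP[_ /orP[/eqP//|d]].
by rewrite (disjointFr d x1) in x2.
Qed.

Lemma par_classes_meet S1 S2 M1 M2 : S1 \in par_classes Ls -> S2 \in par_classes Ls ->
  S1 != S2 -> M1 \in S1 -> M2 \in S2 -> exists z, M1 :&: M2 = [set z].
Proof.
move=> h1 h2 ne m1 m2.
have [M1L e1] := par_classE h1 m1; have [M2L _] := par_classE h2 m2.
have : ~~ parallel M1 M2.
  apply: contra ne => p; apply/eqP; apply: (par_class_eq h1 h2 _ m2).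
  by rewrite e1 inE M2L.
rewrite /parallel negb_or -setI_eq0 => /andP[ne12 /set0Pn[z /setIP[z1 z2]]].
exists z; apply/setP => w; rewrite !inE.
apply/andP/eqP => [[w1 w2]|->] //; apply/eqP; apply: contraR ne12 => wz.
by apply/eqP; apply: (line_uniq _ _ wz).
Qed.

End AffinePlane.

Section AffinePlaneOrder.
Variables (m : nat) (X : finType) (Ls : {set {set X}}).
Hypotheses (affX : aff_plane_order m Ls) (m_gt1 : 1 < m).

Lemma line_nonempty L : L \in Ls -> exists x, x \in L.
Proof.
case: affX => _ _ cardL /cardL hL.
by apply/card_gt0P; rewrite hL; exact: ltnW.
Qed.

Lemma other_point (x : X) : exists y, y != x.
Proof.
case: affX => _ cardX _.
have : 1 < #|[set: X]|.
  rewrite cardsT cardX; apply: (leq_trans m_gt1); rewrite -{1}(expn1 m).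
  by apply: leq_pexp2l => //; exact: ltnW.
case/card_gt1P => a [b [_ _ ab]].
case: (eqVneq a x) => [ax|ax]; last by exists a.
by exists b; rewrite -ax eq_sym.
Qed.

End AffinePlaneOrder.

Lemma aff_plane_imset (Y X : finType) (f : Y -> X) (Ls : {set {set Y}}) :
  injective f -> aff_plane [set: Y] Ls ->
  aff_plane (f @: [set: Y]) [set f @: (L : {set Y}) | L in Ls].
Proof.
move=> finj [_ join playfair [x [y [z [_ _ _ noncol]]]]].
have fI := imset_inj finj.
split.
- by move=> L' /imsetP[L LL ->]; apply: imsetS; exact: subsetT.
- move=> x' y' /imsetP[a _ ->] /imsetP[b _ ->]; rewrite (inj_eq finj) => ab.
  rewrite -(join a b (in_setT _) (in_setT _) ab) -(card_imset _ fI).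
  apply: eq_card => L'; rewrite inE; apply/andP/imsetP.
    case=> /imsetP[L LL ->]; rewrite !mem_imset // => abL.
    by exists L => //; rewrite inE LL.
  case=> L; rewrite inE => /andP[LL abL] ->; split; first exact: imset_f.
  by rewrite !mem_imset.
- move=> L' x' /imsetP[L LL ->] /imsetP[a _ ->]; rewrite mem_imset // => aL.
  rewrite -(playfair L a LL (in_setT _) aL) -(card_imset _ fI).
  apply: eq_card => M'; rewrite inE; apply/andP/imsetP.
    case=> /imsetP[M ML ->]; rewrite mem_imset // imset_disjoint // => abL.
    by exists M => //; rewrite inE ML.
  case=> M; rewrite inE => /andP[ML abL] ->; split; first exact: imset_f.
  by rewrite mem_imset // imset_disjoint.
- exists (f x), (f y), (f z); split; try exact: imset_f; try exact: in_setT.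
  by move=> L' /imsetP[L LL ->]; rewrite !mem_imset //; exact: noncol.
Qed.
(* An orthogonal array OA(2,m+1,m): rows R, columns C (with m+1 elements), symbols S. *)
Section OrthogonalArray.
Variables (m : nat) (Pt S R : finType) (C : pred Pt) (O : R -> Pt -> S).
Hypotheses (m_gt0 : 0 < m) (card_S : #|S| = m) (card_C : #|[set P | C P]| = m.+1).
Hypothesis oaO : forall P Q, C P -> C Q -> P != Q -> forall a b : S,
  #|[set r | (O r P == a) && (O r Q == b)]| = 1.

Lemma oa_other_column P : exists2 Q, C Q & Q != P.
Proof.
have : 1 < #|[set P | C P]| by rewrite card_C ltnS.
case/card_gt1P => a [b []]; rewrite !inE => aC bC ab.
case: (eqVneq a P) => [aP|aP]; last by exists a.
by exists b; rewrite // -aP eq_sym.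
Qed.

Lemma oa_row_exists P Q a b : C P -> C Q -> P != Q ->
  exists r, O r P = a /\ O r Q = b.
Proof.
move=> PC QC PQ; have /eqP/cards1P[r hr] := oaO PC QC PQ a b; exists r.
have : r \in [set r | (O r P == a) && (O r Q == b)] by rewrite hr inE.
by rewrite inE => /andP[/eqP-> /eqP->].
Qed.

Lemma oa_row_uniq r s P Q : C P -> C Q -> P != Q ->
  O r P = O s P -> O r Q = O s Q -> r = s.
Proof.
move=> PC QC PQ e1 e2; have /eqP/cards1P[t ht] := oaO PC QC PQ (O s P) (O s Q).
have : r \in [set r | (O r P == O s P) && (O r Q == O s Q)] by rewrite inE e1 e2 !eqxx.
have : s \in [set r | (O r P == O s P) && (O r Q == O s Q)] by rewrite inE !eqxx.
by rewrite ht !inE => /eqP-> /eqP->.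
Qed.

Lemma oa_column_count P a : C P -> #|[set r | O r P == a]| = m.
Proof.
move=> PC; have [Q QC QP] := oa_other_column P.
rewrite (card_fibres _ (fun r => O r Q)).
transitivity (\sum_(b : S) 1); last by rewrite sum1_card cardT -cardE card_S.
apply: eq_bigr => b _; rewrite -(oaO PC QC _ a b); last by rewrite eq_sym.
by apply: eq_card => r; rewrite !inE.
Qed.

Lemma oa_row_with P a : C P -> exists r, O r P = a.
Proof.
move=> PC; have : 0 < #|[set r | O r P == a]| by rewrite oa_column_count.
by case/card_gt0P => r; rewrite inE => /eqP; exists r.
Qed.

Definition agreements (r t : R) := #|[set P | C P & O t P == O r P]|.

Lemma agreements_self r : agreements r r = m.+1.
Proof. by rewrite -card_C; apply: eq_card => P; rewrite !inE eqxx andbT. Qed.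

Lemma agreements_le1 r t : t != r -> agreements r t <= 1.
Proof.
move=> tr; apply/card_le1P => P1; rewrite inE => /andP[P1C /eqP e1] P2; rewrite !inE.
apply/idP/idP => [/andP[P2C /eqP e2]|/eqP->]; last by rewrite P1C e1 eqxx.
by apply: contraR tr => P21; apply/eqP; exact: (oa_row_uniq P2C P1C P21).
Qed.

(* Double counting the pairs (column, row agreeing with r in that column). *)
Lemma agreements_sum r : \sum_t agreements r t = m.+1 * m.
Proof.
rewrite (eq_bigr (fun t => \sum_(P in C) (O t P == O r P : nat))); last first.
  by move=> t _; rewrite /agreements -card_setin_sum; apply: eq_card => P; rewrite !inE.
rewrite exchange_big /= -card_C -sum1_card big_distrl /= mul1n.
apply: eq_big => [P|P PC]; first by rewrite inE.
by rewrite -(oa_column_count (O r P) PC) -card_setin_sum; apply: eq_card => t; rewrite !inE.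
Qed.

(* With m^2 rows, any two rows agree in some column: a row r meets m+1 rows in itself,
   at most one agreement with every other row, and m(m+1) agreements in total. *)
Lemma oa_rows_meet (card_R : #|R| = m ^ 2) r s : exists2 P, C P & O r P = O s P.
Proof.
case: (eqVneq r s) => [<-|rs].
  have : 0 < #|[set P | C P]| by rewrite card_C.
  by case/card_gt0P => P; rewrite inE => PC; exists P.
have : 0 < agreements r s.
  have total := agreements_sum r.
  rewrite (bigD1 r) // (bigD1 s) /= ?agreements_self in total; last by rewrite eq_sym.
  have rows : 1 + (1 + \sum_(t | (t != r) && (t != s)) 1) = m ^ 2.
    by rewrite -card_R -sum1_card [RHS](bigD1 r) // [X in _ = _ + X](bigD1 s) //= eq_sym.
  have others : \sum_(t | (t != r) && (t != s)) agreements r t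
             <= \sum_(t | (t != r) && (t != s)) 1.
    by apply: leq_sum => t /andP[tr _]; exact: agreements_le1.
  nia.
by case/card_gt0P => P; rewrite inE => /andP[PC /eqP]; exists P.
Qed.

End OrthogonalArray.

Section Construction.
Unset Implicit Arguments.
Variables (m : nat) (Pt Ln : finType) (pinc : Pt -> Ln -> bool)
  (AP : Pt -> finType) (AL : forall P : Pt, {set {set AP P}})
  (Sym : Ln -> finType) (O : forall l : Ln, 'I_(m ^ 2) -> Pt -> Sym l)
  (pi : forall P : Pt, Ln -> {set {set AP P}})
  (beta : forall (P : Pt) (l : Ln), Sym l -> {set AP P}).
Set Implicit Arguments.
Hypotheses (m_gt1 : 1 < m) (planeP : proj_plane_order m pinc)
  (affA : forall P, aff_plane_order m (AL P)) (card_Sym : forall l, #|Sym l| = m).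
Hypothesis oaO : forall l P Q, pinc P l -> pinc Q l -> P != Q -> forall a b : Sym l,
  #|[set r | (O l r P == a) && (O l r Q == b)]| = 1.
Hypothesis pi_class : forall P l, pinc P l -> pi P l \in par_classes (AL P).
Hypothesis pi_inj : forall P l1 l2, pinc P l1 -> pinc P l2 -> pi P l1 = pi P l2 -> l1 = l2.
Hypothesis pi_onto : forall P S, S \in par_classes (AL P) -> exists2 l, pinc P l & pi P l = S.
Hypothesis beta_inj : forall P l, pinc P l -> injective (beta P l).
Hypothesis beta_in_pi : forall P l a, pinc P l -> beta P l a \in pi P l.
Hypothesis beta_onto : forall P l L, pinc P l -> L \in pi P l -> exists a, beta P l a = L.

Local Notation X := {P : Pt & AP P}.
Local Notation HL := (Hlines pinc O beta).
Local Notation Hl := (Hline pinc O beta).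
Local Notation T P := (@Tagged Pt P AP).

Let m_gt0 : 0 < m. Proof. exact: ltnW. Qed.
Let aff_planeA P : aff_plane [set: AP P] (AL P). Proof. by case: (affA P). Qed.

Lemma card_points_on l : #|[set P | pinc P l]| = m.+1.
Proof. by case: planeP => _ -> _. Qed.

Lemma Tagged_inj P : injective (T P).
Proof. by move=> u v e; have := congr1 (tagged_as (T P u)) e; rewrite !tagged_asE. Qed.

Lemma mem_Hline P y l r : (T P y \in Hl l r) = pinc P l && (y \in beta P l (O l r P)).
Proof. by rewrite inE. Qed.

Lemma Hline_in l r : Hl l r \in HL.
Proof. by apply/imsetP; exists (l, r). Qed.

Lemma HlinesP g : g \in HL -> exists l r, g = Hl l r.
Proof. by case/imsetP => -[l r] _ ->; exists l, r. Qed.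

Lemma beta_line P l a : pinc P l -> beta P l a \in AL P.
Proof. by move=> Pl; case: (par_classE (aff_planeA P) (pi_class Pl) (beta_in_pi a Pl)). Qed.

Lemma beta_card P l a : pinc P l -> #|beta P l a| = m.
Proof. by move=> Pl; case: (affA P) => _ _; apply; exact: beta_line. Qed.

Lemma beta_nonempty P l a : pinc P l -> exists y, y \in beta P l a.
Proof. by move=> Pl; exact: (line_nonempty (affA P) m_gt1 (beta_line a Pl)). Qed.

Lemma beta_cover P l y : pinc P l -> exists a, y \in beta P l a.
Proof.
move=> Pl; have [M MS yM] := par_class_cover (aff_planeA P) y (pi_class Pl).
by have [a ea] := beta_onto Pl MS; exists a; rewrite ea.
Qed.

Lemma beta_uniq P l a b y : pinc P l -> y \in beta P l a -> y \in beta P l b -> a = b.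
Proof.
move=> Pl ya yb; apply: (beta_inj Pl).
exact: (par_class_disjoint (aff_planeA P) (pi_class Pl) (beta_in_pi a Pl) (beta_in_pi b Pl) ya yb).
Qed.

Lemma beta_onto_lines P L : L \in AL P -> exists2 l, pinc P l & exists a, beta P l a = L.
Proof.
move=> LL; have [l Pl el] := pi_onto (parallel_class_in LL).
exists l => //; apply: (beta_onto Pl); rewrite el; exact: parallel_class_self.
Qed.

(* The line l is determined by the line beta(P,l,a) of A_P, through its class pi(P,l). *)
Lemma beta_eq_line P l l' a a' : pinc P l -> pinc P l' ->
  beta P l a = beta P l' a' -> l = l'.
Proof.
move=> Pl Pl' e; apply: (pi_inj Pl Pl').
apply: (par_class_eq (aff_planeA P) (pi_class Pl) (pi_class Pl')).
  exact: beta_in_pi a Pl.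
by rewrite e; exact: beta_in_pi.
Qed.

Lemma Hline_fibre P l r : [set x in Hl l r | tag x == P] =
  if pinc P l then T P @: beta P l (O l r P) else set0.
Proof.
apply/setP => -[Q y]; rewrite inE /= mem_Hline; case: ifP => Pl; last first.
  by rewrite inE; apply/negP => /andP[/andP[Ql _] /eqP QP]; rewrite -QP Ql in Pl.
apply/andP/imsetP => [[/andP[_ yB] /eqP QP]|[y' yB e]]; first by subst Q; exists y.
have QP : Q = P by move: (congr1 tag e).
by subst Q; rewrite (Tagged_inj e) Pl yB.
Qed.

(* Each line of H has m points over each of the m+1 points of its line of P. *)
Lemma Hline_card l r : #|Hl l r| = m * m.+1.
Proof.
rewrite (card_fibres _ tag).
rewrite (eq_bigr (fun P => if pinc P l then m else 0)); last first.
  move=> P _; rewrite Hline_fibre; case: ifP => Pl; last exact: cards0.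
  by rewrite card_imset ?beta_card //; exact: Tagged_inj.
by rewrite -big_mkcond sum_nat_cond_const card_points_on mulnC.
Qed.

Lemma Hline_inj_l l l' r r' : Hl l r = Hl l' r' -> l = l'.
Proof.
move=> e; apply: contraTeq isT => ll'.
case: planeP => [[_ meet1 _] _ _].
suff on_l' : [set P | pinc P l && pinc P l'] = [set P | pinc P l].
  by move: (meet1 l l' ll'); rewrite on_l' card_points_on => -[m0]; move: m_gt0; rewrite m0.
apply/setP => P; rewrite !inE; case Pl: (pinc P l) => //=.
have [y yB] := beta_nonempty (O l r P) Pl.
have : T P y \in Hl l r by rewrite mem_Hline Pl.
by rewrite e mem_Hline => /andP[].
Qed.

Lemma Hline_inj_r l : injective (Hl l).
Proof.
move=> r r' e.
have agree R : pinc R l -> O l r R = O l r' R.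
  move=> Rl; have [y yB] := beta_nonempty (O l r R) Rl.
  have : T R y \in Hl l r by rewrite mem_Hline Rl.
  by rewrite e mem_Hline => /andP[_ yB']; exact: beta_uniq Rl yB yB'.
have [P Pl] : exists P, pinc P l.
  have : 0 < #|[set P | pinc P l]| by rewrite card_points_on.
  by case/card_gt0P => P; rewrite inE; exists P.
have [Q Ql QP] := oa_other_column m_gt0 (card_points_on l) P.
by apply: (oa_row_uniq (@oaO l) Ql Pl QP); apply: agree.
Qed.

(* Points over distinct points P, Q of the projective plane lie on exactly one line of H:
   it lies over the line PQ and is given by the unique row with the prescribed entries. *)
Lemma lines_through_far P Q (u : AP P) (v : AP Q) : P != Q ->
  #|[set g in HL | (T P u \in g) && (T Q v \in g)]| = 1.
Proof.
move=> PQ; case: planeP => [[join1 _ _] _ _].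
have /eqP/cards1P[l0 hl0] := join1 P Q PQ.
have : l0 \in [set l | pinc P l && pinc Q l] by rewrite hl0 inE.
rewrite inE => /andP[Pl0 Ql0].
have [a ua] := beta_cover u Pl0; have [b vb] := beta_cover v Ql0.
have [r0 [e1 e2]] := oa_row_exists (@oaO l0) a b Pl0 Ql0 PQ.
apply/eqP/cards1P; exists (Hl l0 r0); apply/setP => g; rewrite !inE.
apply/idP/eqP => [/andP[/HlinesP[l [r ->]] /andP[]]|->]; last first.
  by rewrite Hline_in !mem_Hline Pl0 Ql0 e1 e2 ua vb.
rewrite !mem_Hline => /andP[Pl ub] /andP[Ql vb'].
have : l \in [set l | pinc P l && pinc Q l] by rewrite inE Pl Ql.
rewrite hl0 inE => /eqP el; subst l.
have ea := beta_uniq Pl ub ua; have eb := beta_uniq Ql vb' vb.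
by congr Hl; apply: (oa_row_uniq (@oaO l0) Pl Ql PQ); rewrite ?ea ?eb.
Qed.

(* Distinct rows give distinct lines, so m lines of H over l carry the symbol a at P. *)
Lemma card_rows_with l P a : pinc P l -> #|Hl l @: [set r | O l r P == a]| = m.
Proof.
move=> Pl; rewrite card_imset; last exact: Hline_inj_r.
exact: (oa_column_count m_gt0 (card_Sym l) (card_points_on l) (@oaO l)).
Qed.

(* Two distinct points over the same P lie on m >= 2 lines of H: those coming from the
   m rows that put the symbol of their joining line of A_P in column P. *)
Lemma lines_through_near P (u v : AP P) : u != v ->
  1 < #|[set g in HL | (T P u \in g) && (T P v \in g)]|.
Proof.
move=> uv; have [L LL /andP[uL vL]] := two_points_line (aff_planeA P) uv.
have [l Pl [a ea]] := beta_onto_lines LL.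
apply: (leq_trans m_gt1); rewrite -[leqLHS](card_rows_with a Pl).
apply: subset_leq_card.
apply/subsetP => g /imsetP[r]; rewrite inE => /eqP er ->.
by rewrite inE Hline_in !mem_Hline Pl er ea uL vL.
Qed.

Lemma pt_nb_tag x y : pt_nb HL x y = (tag x == tag y).
Proof.
case: x => P u; case: y => Q v /=; rewrite /pt_nb.
case: (eqVneq P Q) => [e|PQ]; last first.
  rewrite (lines_through_far u v PQ) ltnn orbF.
  by apply: contraNF PQ => /eqP/(congr1 tag) /= ->.
subst Q; case: (eqVneq u v) => [->|uv]; first by rewrite eqxx.
by rewrite (lines_through_near uv) orbT.
Qed.

(* Two lines of H over the same line l of P share the m points over a column in which
   their rows agree. *)
Lemma Hlines_meet_same l r r' : 1 < #|Hl l r :&: Hl l r'|.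
Proof.
have [P Pl e] := oa_rows_meet m_gt0 (card_Sym l) (card_points_on l) (@oaO l) (card_ord _) r r'.
have cnt : #|T P @: beta P l (O l r P)| = m.
  by rewrite card_imset ?beta_card //; exact: Tagged_inj.
apply: (leq_trans m_gt1); rewrite -[leqLHS]cnt; apply: subset_leq_card.
by apply/subsetP => x /imsetP[y yB ->]; rewrite inE !mem_Hline Pl yB -e yB.
Qed.

(* Two lines of H over distinct lines l, l' of P meet in exactly one point, lying over
   the intersection P0 of l and l', where pi(P0,l) and pi(P0,l') are distinct classes. *)
Lemma Hlines_meet_diff l l' r r' : l != l' -> exists z, Hl l r :&: Hl l' r' = [set z].
Proof.
move=> ll'; case: planeP => [[_ meet1 _] _ _].
have /eqP/cards1P[P0 hP0] := meet1 l l' ll'.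
have : P0 \in [set P | pinc P l && pinc P l'] by rewrite hP0 inE.
rewrite inE => /andP[Pl Pl'].
have ne : pi P0 l != pi P0 l' by apply: contra ll' => /eqP/(pi_inj Pl Pl')->.
have [z0 hz] := par_classes_meet (aff_planeA P0) (pi_class Pl) (pi_class Pl') ne
   (beta_in_pi (O l r P0) Pl) (beta_in_pi (O l' r' P0) Pl').
exists (T P0 z0); apply/setP => -[Q w]; rewrite in_setI !mem_Hline in_set1.
apply/idP/eqP => [/andP[/andP[Ql w1] /andP[Ql' w2]] | e].
  have : Q \in [set P | pinc P l && pinc P l'] by rewrite inE Ql Ql'.
  rewrite hP0 inE => /eqP eQ; subst Q.
  have : w \in beta P0 l (O l r P0) :&: beta P0 l' (O l' r' P0) by rewrite inE w1 w2.
  by rewrite hz inE => /eqP->.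
have eQ : Q = P0 by move: (congr1 tag e).
subst Q; rewrite (Tagged_inj e) Pl Pl' /=.
by rewrite -in_setI hz set11.
Qed.

Lemma ln_nb_Hline l l' r r' : ln_nb (Hl l r) (Hl l' r') = (l == l').
Proof.
rewrite /ln_nb; case: (eqVneq l l') => [<-|ll']; first by rewrite Hlines_meet_same orbT.
have [z ->] := Hlines_meet_diff r r' ll'; rewrite cards1 orbF.
by apply: contraNF ll' => /eqP/Hline_inj_l->.
Qed.

(* The canonical map from lines of H to lines of P (any default off HL). *)
Definition line_image (l0 : Ln) (g : {set X}) : Ln :=
  if [pick lr : Ln * 'I_(m ^ 2) | g == Hl lr.1 lr.2] is Some lr then lr.1 else l0.

Lemma line_image_Hline l0 l r : line_image l0 (Hl l r) = l.
Proof.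
rewrite /line_image; case: pickP => [[l' r'] /= /eqP/Hline_inj_l//|none].
by have := none (l, r); rewrite /= eqxx.
Qed.

(* Any two points of H are joined by a line (for equal points, use a second point). *)
Lemma Hlines_join x y : exists2 g, g \in HL & (x \in g) && (y \in g).
Proof.
case: x y => [P u] [Q v]; case: (eqVneq P Q) => [e|PQ]; last first.
  have /eqP/cards1P[g /setP/(_ g)] := lines_through_far u v PQ.
  by rewrite !inE eqxx => /andP[gH uvg]; exists g.
subst Q; have [w wu wv] : exists2 w, u != w & (u == v) || (w == v).
  case: (eqVneq u v) => [<-|uv]; last by exists v; rewrite ?eqxx ?orbT.
  by have [w wu] := other_point (affA P) m_gt1 u; exists w; rewrite // eq_sym.
have /ltnW/card_gt0P[g] := lines_through_near wu.
rewrite inE => /and3P[gH ug wg]; exists g; rewrite // ug.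
by case/orP: wv => /eqP<-.
Qed.

Lemma Hlines_meet g h : g \in HL -> h \in HL -> exists z, z \in g :&: h.
Proof.
move=> /HlinesP[l [r ->]] /HlinesP[l' [r' ->]]; case: (eqVneq l l') => [<-|ll'].
  by have /ltnW/card_gt0P[z zi] := Hlines_meet_same l r r'; exists z.
by have [z hz] := Hlines_meet_diff r r' ll'; exists z; rewrite hz set11.
Qed.

(* H is a projective Hjelmslev plane, with the projection onto P as epimorphism. *)
Lemma Hlines_proj_hjelmslev : proj_hjelmslev HL.
Proof.
have [l0 _] : exists l0 : Ln, true.
  case: (planeP) => [[_ _ [P1 _]] _ card_lines].
  have : 0 < #|[set l | pinc P1 l]| by rewrite card_lines.
  by case/card_gt0P => l _; exists l.
split; [exact: Hlines_join | exact: Hlines_meet |].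
exists Pt, Ln, pinc, tag, (line_image l0); split; first by case: planeP.
split.
- by move=> [P u] g /HlinesP[l [r ->]]; rewrite mem_Hline line_image_Hline => /andP[].
- move=> P; have : 0 < #|AP P| by case: (affA P) => _ -> _; rewrite expn_gt0 m_gt0.
  by case/card_gt0P => u _; exists (T P u).
- move=> l; have r0 : 'I_(m ^ 2) by apply: (@Ordinal _ 0); rewrite expn_gt0 m_gt0.
  by exists (Hl l r0); [exact: Hline_in | exact: line_image_Hline].
- by move=> x y; rewrite pt_nb_tag; split => [->|/eqP].
- move=> g h /HlinesP[l [r ->]] /HlinesP[l' [r' ->]].
  by rewrite !line_image_Hline ln_nb_Hline; split => [->|/eqP].
Qed.

(* The neighbours of a point on a line of H are the m points over the same point of P. *)
Lemma Hlines_tr_PH : tr_PH_plane m m HL.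
Proof.
split; [exact: Hlines_proj_hjelmslev | by move=> g /HlinesP[l [r ->]]; exact: Hline_card |].
move=> g [P u] /HlinesP[l [r ->]]; rewrite mem_Hline => /andP[Pl _].
rewrite (eq_card (B := [set x in Hl l r | tag x == P])); last first.
  by move=> y; rewrite !inE pt_nb_tag eq_sym.
by rewrite Hline_fibre Pl card_imset ?beta_card //; exact: Tagged_inj.
Qed.

Lemma Tagged_imsetT P : T P @: [set: AP P] = [set x | tag x == P].
Proof.
apply/setP => -[Q v]; rewrite inE /=; apply/imsetP/eqP => [[v' _ e]|e].
  by move: (congr1 tag e).
by subst Q; exists v.
Qed.

Lemma nbhdE P u : nbhd HL (T P u) = T P @: [set: AP P].
Proof. by rewrite Tagged_imsetT; apply/setP => y; rewrite !inE pt_nb_tag eq_sym. Qed.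

Lemma Hline_nbhd P l r : Hl l r :&: T P @: [set: AP P] =
  if pinc P l then T P @: beta P l (O l r P) else set0.
Proof. by rewrite Tagged_imsetT -setIdE Hline_fibre. Qed.

Lemma Tagged_line_nonempty P (L : {set AP P}) : L \in AL P -> T P @: L != set0.
Proof.
move=> LL; have [y yL] := line_nonempty (affA P) m_gt1 LL.
by apply/set0Pn; exists (T P y); exact: imset_f.
Qed.

(* The lines of H passing through the neighbourhood of a point over P restrict to the
   copy of the line beta(P,l,O(r,P)) of A_P; every line of A_P arises this way. *)
Lemma nbhd_linesE P u : nbhd_lines HL (T P u) = [set T P @: (L : {set AP P}) | L in AL P].
Proof.
rewrite /nbhd_lines nbhdE; apply/setP => b; apply/imsetP/imsetP.
  case=> g; rewrite inE => /andP[/HlinesP[l [r ->]]]; rewrite Hline_nbhd.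
  case: ifP => Pl; last by rewrite eqxx.
  by move=> _ ->; exists (beta P l (O l r P)); first exact: beta_line.
case=> L LL ->; have [l Pl [a ea]] := beta_onto_lines LL.
have [r er] := oa_row_with m_gt0 (card_Sym l) (card_points_on l) (@oaO l) a Pl.
exists (Hl l r); last by rewrite Hline_nbhd Pl er ea.
by rewrite inE Hline_in Hline_nbhd Pl er ea Tagged_line_nonempty.
Qed.

(* Each line of the neighbourhood is the restriction of exactly m lines of H: if it is the
   copy of beta(P,l,a), these are the lines over l from the m rows with symbol a at P. *)
Lemma nbhd_restriction_count P u b : b \in nbhd_lines HL (T P u) ->
  #|[set g in HL | g :&: nbhd HL (T P u) == b]| = m.
Proof.
rewrite nbhd_linesE nbhdE => /imsetP[L LL ->].
have [l Pl [a ea]] := beta_onto_lines LL.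
rewrite -[RHS](card_rows_with a Pl); apply: eq_card => g.
rewrite inE; apply/andP/imsetP => [[/HlinesP[l' [r' ->]]]|[r]]; last first.
  by rewrite inE => /eqP er ->; rewrite Hline_in Hline_nbhd Pl er ea.
rewrite Hline_nbhd; case: ifP => Pl'; last first.
  by move=> /eqP e; move: (Tagged_line_nonempty LL); rewrite -e eqxx.
move=> /eqP/(imset_inj (@Tagged_inj P)); rewrite -ea => e.
have el := beta_eq_line Pl' Pl e; subst l'.
by exists r' => //; rewrite inE (beta_inj Pl e).
Qed.

Lemma nbhd_uniform x : aff_plane (nbhd HL x) (nbhd_lines HL x) /\
  exists k, forall b, b \in nbhd_lines HL x ->
    #|[set g in HL | g :&: nbhd HL x == b]| = k.
Proof.
case: x => P u; split; last by exists m; exact: nbhd_restriction_count.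
by rewrite nbhd_linesE nbhdE; apply: aff_plane_imset; [exact: Tagged_inj | exact: aff_planeA].
Qed.

End Construction.

Theorem mainTheorem1 (m : nat) (Pt Ln : finType) (pinc : Pt -> Ln -> bool)
  (AP : Pt -> finType) (AL : forall P : Pt, {set {set AP P}})
  (Sym : Ln -> finType) (O : forall l : Ln, 'I_(m ^ 2) -> Pt -> Sym l)
  (pi : forall P : Pt, Ln -> {set {set AP P}})
  (beta : forall (P : Pt) (l : Ln), Sym l -> {set AP P}) :
  1 < m ->
  proj_plane_order m pinc ->
  (forall P, aff_plane_order m (AL P)) ->
  (forall l, #|Sym l| = m) ->
  (* O l is an OA(2,m+1,m) on Sym l, columns labelled by the points of l *)
  (forall l P Q, pinc P l -> pinc Q l -> P != Q -> forall a b : Sym l,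
     #|[set r | (O l r P == a) && (O l r Q == b)]| = 1) ->
  (* pi(P,.) : lines through P -> parallel classes of A_P, bijective *)
  (forall P l, pinc P l -> pi P l \in par_classes (AL P)) ->
  (forall P l1 l2, pinc P l1 -> pinc P l2 -> pi P l1 = pi P l2 -> l1 = l2) ->
  (forall P S, S \in par_classes (AL P) -> exists2 l, pinc P l & pi P l = S) ->
  (* beta(P,l) : Sym l -> lines of pi(P,l), bijective *)
  (forall P l, pinc P l -> injective (beta P l)) ->
  (forall P l a, pinc P l -> beta P l a \in pi P l) ->
  (forall P l L, pinc P l -> L \in pi P l -> exists a, beta P l a = L) ->
  tr_PH_plane m m (Hlines pinc O beta) /\ two_uniform_PH (Hlines pinc O beta).
Proof.
move=> m_gt1 planeP affA card_Sym oaO pi_class pi_inj pi_onto beta_inj beta_in_pi beta_onto.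
split; first exact: (Hlines_tr_PH (pi := pi)).
split; first exact: (Hlines_proj_hjelmslev (pi := pi)).
exact: (nbhd_uniform (pi := pi)).
Qed.
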